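(* Let $H$ be an undirected graph with $|V(H)|\le 11$. Then every acyclic orientation $\vec H$ of $H$ satisfies $\mathrm{dtw}(\vec H)\le 2$.
   Context: For a DAG $\vec H$, a source is a vertex of in-degree $0$; $S$ denotes the set of sources; $R(s)$ is the set of vertices reachable from $s$, and $R(B)=\bigcup_{s\in B}R(s)$. A DAG tree decomposition of $\vec H$ is a tree $T$ whose nodes (bags) are subsets of $S$ such that every source lies in some bag and, for any bags $B,B_1,B_2$ with $B$ on the path between $B_1$ and $B_2$ in $T$, $R(B_1)\cap R(B_2)\subseteq R(B)$; its width is the maximum bag size and $\mathrm{dtw}(\vec H)$ is the minimum width. *)

From mathcomp Require Import all_boot.
Set Implicit Arguments. Unset Strict Implicit. Unset Printing Implicit Defensive.

Definition simple_graph (V : finType) (e : rel V) : Prop :=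
  symmetric e /\ irreflexive e.

Definition orientation (V : finType) (e d : rel V) : Prop :=
  (forall x y, e x y = d x y || d y x) /\ (forall x y, d x y -> ~~ d y x).

Definition acyclic_digraph (V : finType) (d : rel V) : Prop :=
  forall x y, d x y -> ~~ connect d y x.

Definition sources (V : finType) (d : rel V) : {set V} :=
  [set v | [forall u, ~~ d u v]].

Definition reach (V : finType) (d : rel V) (s : V) : {set V} :=
  [set v | connect d s v].

Definition reachB (V : finType) (d : rel V) (B : {set V}) : {set V} :=
  \bigcup_(s in B) reach d s.

Definition simple_path (N : finType) (te : rel N) (t1 t2 : N) (p : seq N) : bool :=
  [&& path te t1 p, last t1 p == t2 & uniq (t1 :: p)].

Definition is_tree (N : finType) (te : rel N) : Prop :=
  [/\ symmetric te, irreflexive te,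
      (forall x y, connect te x y) &
      (forall x y p q, simple_path te x y p -> simple_path te x y q -> p = q)].

Definition dag_tree_decomposition (V N : finType) (d : rel V) (te : rel N)
    (B : N -> {set V}) : Prop :=
  [/\ is_tree te,
      (forall t, B t \subset sources d),
      (forall s, s \in sources d -> exists t, s \in B t) &
      (forall t1 t2 p t, simple_path te t1 t2 p -> t \in t1 :: p ->
          reachB d (B t1) :&: reachB d (B t2) \subset reachB d (B t))].

Definition dtd_width (N : finType) (V : finType) (B : N -> {set V}) : nat :=
  \max_(t : N) #|B t|.

Definition dtw_le (V : finType) (d : rel V) (k : nat) : Prop :=
  exists (n : nat) (te : rel 'I_n.+1) (B : 'I_n.+1 -> {set V}),
    dag_tree_decomposition d te B /\ dtd_width B <= k.

(* View the sources as the vertices of a hypergraph whose edges are the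
   non-source vertices u, the edge of u being the set of sources reaching u:
   two sources have a common reachable vertex iff they lie in a common edge.
   Count the weight of a hypergraph as the number of covered vertices plus the
   number of edges with at least two vertices; here it is at most |V| <= 11.
   Deleting at most two vertices brings the weight down to at most 3, so that
   at most one edge survives and it has two vertices.  The deleted sources form
   the centre bag of a star decomposition, the surviving edge one leaf bag, and
   every other source a singleton leaf.

   The weight bound is proved by descent.  If some deletion lowers the weight
   by 4, weight 7 with one deletion remains to be handled.  Otherwise every
   vertex has degree 1 or 2, two edges share at most one vertex and degree-1
   vertices lie in isolated 2-edges, so the weight is 3 e1 + v2 + e2 with
   e2 <= v2 <= C(e2, 2).  This excludes weight 7, and at weight 11 leaves two
   configurations in which two vertices meet all edges but one 2-edge. *)

From mathcomp Require Import all_boot zify.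
Set Implicit Arguments. Unset Strict Implicit. Unset Printing Implicit Defensive.

(** * Hypergraph weight *)

Lemma weight_profile11 e1 e2 v2 : e2 <= v2 -> v2 <= 'C(e2, 2) -> 3 * e1 + v2 + e2 = 11 ->
  (e1 = 1 /\ e2 = 4 /\ v2 = 4) \/ (e1 = 0 /\ e2 = 5 /\ v2 = 6).
Proof.
move=> le_e2 le_v2 sum11; have : e2 <= 5 by lia.
case: e2 le_e2 le_v2 sum11 => [|[|[|[|[|[|e2]]]]]] le_e2 le_v2 sum11 bound;
  first [lia | rewrite ?binS ?bin0 ?bin0n in le_v2; lia].
Qed.

Lemma weight_profile_neq7 e1 e2 v2 : e2 <= v2 -> v2 <= 'C(e2, 2) -> 3 * e1 + v2 + e2 != 7.
Proof.
move=> le_e2 le_v2; apply/eqP=> sum7; have : e2 <= 3 by lia.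
case: e2 le_e2 le_v2 sum7 => [|[|[|[|e2]]]] le_e2 le_v2 sum7 bound;
  first [lia | rewrite ?binS ?bin0 ?bin0n in le_v2; lia].
Qed.

Section Hypergraph.

Variables (X Y : finType) (col : Y -> {set X}).
Implicit Types (G H : {set Y}) (A B : {set X}).

Definition hedges G := [set u in G | 1 < #|col u|].
Definition hcover G := \bigcup_(u in hedges G) col u.
Definition hweight G := #|hcover G| + #|hedges G|.
Definition hdel G A := [set u in G | [disjoint col u & A]].
Definition hstar G x := [set u in hedges G | x \in col u].
Definition hdeg G x := #|hstar G x|.
Definition hlost G a := (hcover G :\ a) :\: hcover (hdel G [set a]).

Lemma in_hedges G u : (u \in hedges G) = (u \in G) && (1 < #|col u|).
Proof. by rewrite [in LHS]inE. Qed.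

Lemma in_hstar G x u : (u \in hstar G x) = (u \in hedges G) && (x \in col u).
Proof. by rewrite [in LHS]inE. Qed.

Lemma hdel0 G : hdel G set0 = G.
Proof. by apply/setP=> u; rewrite inE disjoints_subset setC0 subsetT andbT. Qed.

Lemma hdelU G A B : hdel (hdel G A) B = hdel G (A :|: B).
Proof. by apply/setP=> u; rewrite !inE !disjoints_subset setCU subsetI andbA. Qed.

Lemma hedges_del1 G a : hedges (hdel G [set a]) = [set u in hedges G | a \notin col u].
Proof. by apply/setP=> u; rewrite !inE disjoint_sym disjoints1 andbAC. Qed.

Lemma hcoverP G x : reflect (exists2 u, u \in hedges G & x \in col u) (x \in hcover G).
Proof. exact: bigcupP. Qed.

Lemma sub_hcover G u : u \in hedges G -> col u \subset hcover G.
Proof. by move=> Gu; apply/subsetP=> x xu; apply/hcoverP; exists u. Qed.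

Lemma hcover0_weight G : hcover G = set0 -> hweight G = 0.
Proof.
move=> cover0; rewrite /hweight cover0 cards0; apply/eqP; rewrite cards_eq0.
apply/eqP/setP=> u; rewrite in_set0; apply/negbTE/negP=> Gu.
have /card_gt1P[x [_ [xu _ _]]] : 1 < #|col u| by move: Gu; rewrite in_hedges => /andP[].
by have := subsetP (sub_hcover Gu) x xu; rewrite cover0 in_set0.
Qed.

Lemma hdeg_gt0 G a : a \in hcover G -> 0 < hdeg G a.
Proof. by case/hcoverP=> u Gu au; apply/card_gt0P; exists u; rewrite in_hstar Gu. Qed.

Lemma hdeg_ge2 G x u v : u \in hedges G -> v \in hedges G -> u != v ->
  x \in col u -> x \in col v -> 1 < hdeg G x.
Proof.
move=> Gu Gv uv xu xv; apply/card_gt1P; exists u, v.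
by rewrite !in_hstar Gu Gv xu xv.
Qed.

Lemma card_hedges_del1 G a : #|hedges (hdel G [set a])| + hdeg G a = #|hedges G|.
Proof.
rewrite -(cardsID [set u | a \in col u] (hedges G)) addnC hedges_del1.
by congr (_ + _); apply: eq_card => u; rewrite !inE // andbC.
Qed.

Lemma hcover_del1 G a : hcover (hdel G [set a]) \subset hcover G :\ a.
Proof.
apply/subsetP=> x /hcoverP[u]; rewrite hedges_del1 inE => /andP[Gu au] xu.
rewrite !inE (subsetP (sub_hcover Gu)) // andbT.
by apply: contraNneq au => <-.
Qed.

Lemma hweight_del1 G a : a \in hcover G ->
  hweight (hdel G [set a]) + 1 + hdeg G a + #|hlost G a| <= hweight G.
Proof.
move=> aG; rewrite /hweight /hlost.
have := card_hedges_del1 G a.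
have := cardsID (hcover (hdel G [set a])) (hcover G :\ a).
rewrite (setIidPr (hcover_del1 G a)).
have := cardsD1 a (hcover G); rewrite aG.
lia.
Qed.

Lemma hweight_single_edge H w :
  hedges H \subset [set w] -> #|col w| <= 2 -> hweight H <= 3.
Proof.
move=> Hw colw; rewrite /hweight.
have : #|hedges H| <= 1 by rewrite -(cards1 w) subset_leq_card.
have : hcover H \subset col w.
  by apply/subsetP=> x /hcoverP[u /(subsetP Hw)]; rewrite inE => /eqP ->.
move/subset_leq_card; lia.
Qed.

Lemma hlost_of_hdeg1 G x y u : u \in hedges G -> x \in col u -> y \in col u ->
  y != x -> hdeg G y = 1 -> y \in hlost G x.
Proof.
move=> Gu xu yu yx dy; rewrite !inE yx (subsetP (sub_hcover Gu)) //= andbT.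
apply/negP=> /hcoverP[v]; rewrite hedges_del1 inE => /andP[Gv xv] yv.
have uv : u != v by apply: contraNneq xv => <-.
by have := hdeg_ge2 Gu Gv uv yu yv; rewrite dy.
Qed.

Lemma card_setU_le1 (T : finType) (A B : {set T}) :
  (A == set0) || (B == set0) -> #|A| <= 1 -> #|B| <= 1 -> #|A :|: B| <= 1.
Proof. by case/orP=> /eqP->; rewrite ?set0U ?setU0. Qed.

Lemma transversal2_of_4edges (E : {set Y}) (Q : {set X}) :
  #|E| = 4 -> 3 < #|Q| ->
  (forall q, q \in Q -> exists u v, [/\ u \in E, v \in E, u != v, q \in col u & q \in col v]) ->
  (forall u v, u \in E -> v \in E -> u != v -> #|Q :&: col u :&: col v| <= 1) ->
  exists a b, forall u, u \in E -> (a \in col u) || (b \in col u).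
Proof.
(* The points of Q lie in pairwise distinct pairs of edges, so at least four of
   the six pairs are occupied and some perfect matching of the four edges
   consists of two occupied pairs. *)
move=> card_E card_Q Q_in2 Q_lin.
have memE u : (u \in E) = (u \in enum E) by rewrite mem_enum.
have := enum_uniq (mem E); have : size (enum E) = 4 by rewrite -cardE.
case: (enum E) memE => [|u1 [|u2 [|u3 [|u4 [|? ?]]]]] // memE _.
rewrite /= !inE !negb_or -!andbA => /and4P[n12 n13 n14 /and4P[n23 n24 n34 _]].
have [Eu1 Eu2 Eu3 Eu4] : [/\ u1 \in E, u2 \in E, u3 \in E & u4 \in E].
  by rewrite !memE !inE !eqxx !orbT.
pose I u v := Q :&: col u :&: col v.
have covered_by u v u' v' : (forall w, w \in E -> [|| w == u, w == v, w == u' | w == v']) ->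
    I u v != set0 -> I u' v' != set0 ->
    exists a b, forall w, w \in E -> (a \in col w) || (b \in col w).
  move=> Euv /set0Pn[a] /[!inE] /andP[/andP[_ au] av] /set0Pn[b] /[!inE] /andP[/andP[_ bu'] bv'].
  by exists a, b => w /Euv /or4P[] /eqP->; rewrite ?au ?av ?bu' ?bv' ?orbT.
have Ecases w : w \in E -> [|| w == u1, w == u2, w == u3 | w == u4].
  by rewrite memE !inE.
have [/andP[]|M1] := boolP ((I u1 u2 != set0) && (I u3 u4 != set0)).
  by apply: (covered_by u1 u2 u3 u4) => w /Ecases /or4P[]->; rewrite ?orbT.
have [/andP[]|M2] := boolP ((I u1 u3 != set0) && (I u2 u4 != set0)).
  by apply: (covered_by u1 u3 u2 u4) => w /Ecases /or4P[]->; rewrite ?orbT.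
have [/andP[]|M3] := boolP ((I u1 u4 != set0) && (I u2 u3 != set0)).
  by apply: (covered_by u1 u4 u2 u3) => w /Ecases /or4P[]->; rewrite ?orbT.
suff : #|Q| <= 3 by rewrite leqNgt card_Q.
have matching_le1 u v u' v' : ~~ ((I u v != set0) && (I u' v' != set0)) ->
    u \in E -> v \in E -> u != v -> u' \in E -> v' \in E -> u' != v' -> #|I u v :|: I u' v'| <= 1.
  rewrite negb_and !negbK => M *; exact: card_setU_le1 M (Q_lin _ _ _ _ _) (Q_lin _ _ _ _ _).
have sub : Q \subset (I u1 u2 :|: I u3 u4) :|: (I u1 u3 :|: I u2 u4) :|: (I u1 u4 :|: I u2 u3).
  apply/subsetP=> q Qq; have [u [v [/Ecases Eu /Ecases Ev uv qu qv]]] := Q_in2 q Qq.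
  by case/or4P: Eu uv qu qv => /eqP-> ; case/or4P: Ev => /eqP->;
    rewrite ?eqxx // !inE Qq => _ -> ->; rewrite ?orbT.
apply: leq_trans (subset_leq_card sub) _.
apply: leq_trans (leq_card_setU _ _).1 _; rewrite -[3]/(2 + 1) leq_add //.
  apply: leq_trans (leq_card_setU _ _).1 _; rewrite -[2]/(1 + 1) leq_add //.
  all: by apply: matching_le1; rewrite // eq_sym.
Qed.

Lemma sum_card_col (E : {set Y}) (D : {set X}) : {in E, forall u, col u \subset D} ->
  \sum_(u in E) #|col u| = \sum_(x in D) #|[set u in E | x \in col u]|.
Proof.
move=> colD; transitivity (\sum_(u in E) \sum_(x in D) (if x \in col u then 1 else 0)).
  apply: eq_bigr => u Eu; rewrite -big_mkcondr -sum1_card; apply: eq_bigl => x /=.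
  by case: (boolP (x \in col u)) => [/(subsetP (colD u Eu)) ->|]; rewrite ?andbF.
rewrite exchange_big; apply: eq_bigr => x _.
by rewrite -big_mkcondr -sum1_card; apply: eq_bigl => u; rewrite inE.
Qed.

Lemma hweight_del2_le3 G a b w : #|col w| <= 2 ->
  (forall u, u \in hedges G -> u != w -> (a \in col u) || (b \in col u)) ->
  hweight (hdel G [set a; b]) <= 3.
Proof.
move=> colw hit; apply: hweight_single_edge colw; apply/subsetP=> u.
rewrite in_hedges in_set -andbA => /and3P[Gu dis cu]; rewrite inE.
have Gu' : u \in hedges G by rewrite in_hedges Gu.
apply: contraT => uw; have /orP[au|bu] := hit u Gu' uw.
  by have := disjointFr dis au; rewrite !inE eqxx.
by have := disjointFr dis bu; rewrite !inE eqxx orbT.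
Qed.

(** * Hypergraphs where no deletion lowers the weight by 4 *)

Section Rigid.

Variable G : {set Y}.
Hypothesis drop_le3 : forall a, hweight G <= hweight (hdel G [set a]) + 3.

Let in_cover u x : u \in hedges G -> x \in col u -> x \in hcover G.
Proof. by move=> Gu; apply/subsetP/sub_hcover. Qed.

Lemma rigid_loss a : a \in hcover G -> 1 + hdeg G a + #|hlost G a| <= 3.
Proof. by move=> aG; have := hweight_del1 aG; have := drop_le3 a; lia. Qed.

Lemma rigid_hdeg12 x : x \in hcover G -> hdeg G x = 1 \/ hdeg G x = 2.
Proof. by move=> xG; have := rigid_loss xG; have := hdeg_gt0 xG; lia. Qed.

Lemma rigid_hdeg2_keep a y : a \in hcover G -> hdeg G a = 2 ->
  y \in hcover G -> y != a -> exists2 v, v \in hedges G & a \notin col v /\ y \in col v.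
Proof.
move=> aG da yG ya; have : y \in hcover (hdel G [set a]).
  apply/negPn/negP=> yH; have ylost : y \in hlost G a by rewrite !inE ya yG yH.
  have : 0 < #|hlost G a| by apply/card_gt0P; exists y.
  by have := rigid_loss aG; lia.
by case/hcoverP=> v; rewrite hedges_del1 inE => /andP[Gv av] yv; exists v.
Qed.

Lemma rigid_hdeg2_edge x y u : hdeg G x = 2 -> u \in hedges G ->
  x \in col u -> y \in col u -> hdeg G y = 2.
Proof.
move=> dx Gu xu yu; have [-> //|yx] := eqVneq y x.
have [v Gv [xv yv]] := rigid_hdeg2_keep (in_cover Gu xu) dx (in_cover Gu yu) yx.
have uv : u != v by apply: contraNneq xv => <-.
by have := hdeg_ge2 Gu Gv uv yu yv; have := rigid_hdeg12 (in_cover Gu yu); lia.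
Qed.

Lemma rigid_linear u v x y : u \in hedges G -> v \in hedges G -> u != v ->
  x \in col u -> x \in col v -> y \in col u -> y \in col v -> x = y.
Proof.
move=> Gu Gv uv xu xv yu yv; apply/eqP/negPn/negP=> xy.
have yx : y != x by rewrite eq_sym.
have dx : hdeg G x = 2.
  by have := hdeg_ge2 Gu Gv uv xu xv; have := rigid_hdeg12 (in_cover Gu xu); lia.
have [w Gw [xw yw]] := rigid_hdeg2_keep (in_cover Gu xu) dx (in_cover Gu yu) yx.
have wu : w != u by apply: contraNneq xw => ->.
have wv : w != v by apply: contraNneq xw => ->.
have : w |: [set u; v] \subset hstar G y.
  by apply/subsetP=> z; rewrite in_setU1 in_set2 => /or3P[]/eqP->; rewrite in_hstar ?Gu ?Gv ?Gw.
have le2 : hdeg G y <= 2 by case: (rigid_hdeg12 (in_cover Gu yu)) => ->.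
move/subset_leq_card/leq_trans/(_ le2).
by rewrite cardsU1 cards2 uv !inE (negbTE wu) (negbTE wv).
Qed.

Lemma rigid_hdeg1_edge x u : hdeg G x = 1 -> u \in hedges G -> x \in col u ->
  #|col u| = 2 /\ {in col u, forall y, hdeg G y = 1}.
Proof.
move=> dx Gu xu.
have dy : {in col u, forall y, hdeg G y = 1}.
  move=> y yu; case: (rigid_hdeg12 (in_cover Gu yu)) => // dy.
  by have := rigid_hdeg2_edge dy Gu yu xu; rewrite dx.
split=> //.
have : col u :\ x \subset hlost G x.
  by apply/subsetP=> y /setD1P[yx yu]; apply: hlost_of_hdeg1 Gu xu yu yx (dy y yu).
move/subset_leq_card; have := rigid_loss (in_cover Gu xu); rewrite dx.
have := cardsD1 x (col u); rewrite xu.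
have : 1 < #|col u| by move: Gu; rewrite in_hedges => /andP[].
lia.
Qed.

Lemma rigid_drop a : a \in hcover G -> hweight (hdel G [set a]) + 3 <= hweight G.
Proof.
move=> aG; have := hweight_del1 aG.
case: (rigid_hdeg12 aG) => da; rewrite da; last by lia.
have /card_gt0P[u] : 0 < hdeg G a by rewrite da.
rewrite in_hstar => /andP[Gu au]; have [card2 deg1] := rigid_hdeg1_edge da Gu au.
have /card_gt0P[y /setD1P[ya yu]] : 0 < #|col u :\ a|.
  by have := cardsD1 a (col u); rewrite au card2; lia.
have : 0 < #|hlost G a|.
  by apply/card_gt0P; exists y; apply: hlost_of_hdeg1 Gu au yu ya (deg1 y yu).
lia.
Qed.

Let V2 := [set x in hcover G | hdeg G x == 2].
Let V1 := hcover G :\: V2.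
Let E2 := [set u in hedges G | col u \subset V2].
Let E1 := hedges G :\: E2.

Let hdeg_V1 x : x \in V1 -> hdeg G x = 1.
Proof.
case/setDP=> xG; rewrite inE xG /=.
by case: (rigid_hdeg12 xG) => ->.
Qed.

Let hdeg_V2 x : x \in V2 -> hdeg G x = 2.
Proof. by rewrite inE => /andP[_ /eqP]. Qed.

Let E1_edge u : u \in E1 -> #|col u| = 2 /\ col u \subset V1.
Proof.
case/setDP=> Gu; rewrite inE Gu => /subsetPn[x xu xV2].
have xV1 : x \in V1 by rewrite in_setD xV2 (in_cover Gu xu).
have [card2 deg1] := rigid_hdeg1_edge (hdeg_V1 xV1) Gu xu.
split=> //; apply/subsetP=> y yu; rewrite inE (in_cover Gu yu) andbT inE.
by rewrite (in_cover Gu yu) deg1.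
Qed.

Let V2_cover : V2 \subset hcover G.
Proof. by rewrite /V2 setIdE subsetIl. Qed.

Let E2_hedges : E2 \subset hedges G.
Proof. by rewrite /E2 setIdE subsetIl. Qed.

Let hstar_V2 x : x \in V2 -> hstar G x = [set u in E2 | x \in col u].
Proof.
move=> xV2; apply/setP=> u; rewrite in_hstar in_set; apply: andb_id2r => xu.
rewrite /E2 in_set; apply/idP/andP=> [Gu|[]//]; split=> //.
apply/subsetP=> y yu; rewrite inE (in_cover Gu yu).
by rewrite (rigid_hdeg2_edge (hdeg_V2 xV2) Gu xu yu).
Qed.

Let hstar_V1 x : x \in V1 -> hstar G x = [set u in E1 | x \in col u].
Proof.
case/setDP=> xG xV2; apply/setP=> u; rewrite in_hstar in_set; apply: andb_id2r => xu.
rewrite in_setD /E2 in_set; case: (u \in hedges G); rewrite ?andbF //=.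
by rewrite andbT; apply/esym; apply: contraNN xV2 => /subsetP; apply.
Qed.

Let sum_E2 : \sum_(u in E2) #|col u| = #|V2| * 2.
Proof.
rewrite (sum_card_col (D := V2)) => [|u]; last by rewrite inE => /andP[].
by rewrite -sum_nat_const; apply: eq_bigr => x xV2; rewrite -hstar_V2 // -(hdeg_V2 xV2).
Qed.

Let card_V1 : #|V1| = #|E1| * 2.
Proof.
transitivity (\sum_(u in E1) #|col u|).
  rewrite (sum_card_col (D := V1)) => [|u /E1_edge[]//].
  by rewrite -sum1_card; apply: eq_bigr => x xV1; rewrite -hstar_V1 // -(hdeg_V1 xV1).
by rewrite -sum_nat_const; apply: eq_bigr => u /E1_edge[].
Qed.

Let card_E2_le : #|E2| <= #|V2|.
Proof.
rewrite -(leq_pmul2r (isT : 0 < 2)) -sum_E2 -sum_nat_const; apply: leq_sum => u E2u.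
by have := subsetP E2_hedges u E2u; rewrite in_hedges => /andP[].
Qed.

Let E2_linear (Q : {set X}) u v : u \in E2 -> v \in E2 -> u != v ->
  #|Q :&: col u :&: col v| <= 1.
Proof.
move=> /(subsetP E2_hedges) Gu /(subsetP E2_hedges) Gv uv.
apply/card_le1_eqP=> x y; rewrite !inE => /andP[/andP[_ xu] xv] /andP[/andP[_ yu] yv].
exact: rigid_linear Gu Gv uv yu yv xu xv.
Qed.

Let V2_in2 x : x \in V2 -> exists u v, [/\ u \in E2, v \in E2, u != v, x \in col u & x \in col v].
Proof.
move=> xV2; have : 1 < #|hstar G x| by rewrite [#|_|](hdeg_V2 xV2).
rewrite hstar_V2 // => /card_gt1P[u [v [/setIdP[E2u xu] /setIdP[E2v xv] uv]]].
by exists u, v.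
Qed.

Let card_V2_le : #|V2| <= 'C(#|E2|, 2).
Proof.
have inj : {in V2 &, injective (hstar G)}.
  move=> x y xV2 yV2 xy; have [u [v [E2u E2v uv xu xv]]] := V2_in2 xV2.
  have yu : u \in hstar G y by rewrite -xy in_hstar (subsetP E2_hedges).
  have yv : v \in hstar G y by rewrite -xy in_hstar (subsetP E2_hedges).
  move: yu yv; rewrite !in_hstar => /andP[Gu yu] /andP[Gv yv].
  exact: rigid_linear Gu Gv uv xu xv yu yv.
rewrite -cards_draws -(card_in_imset inj); apply/subset_leq_card/subsetP=> _ /imsetP[x xV2 ->].
rewrite inE [#|_|](hdeg_V2 xV2) eqxx andbT hstar_V2 //.
by apply/subsetP=> u /setIdP[].
Qed.

Let hweight_split : hweight G = #|V1| + #|V2| + #|E1| + #|E2|.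
Proof.
have := cardsID V2 (hcover G); have := cardsID E2 (hedges G).
by rewrite (setIidPr V2_cover) (setIidPr E2_hedges) /hweight /V1 /E1; lia.
Qed.

Lemma rigid_hweight_neq7 : hweight G != 7.
Proof.
have := weight_profile_neq7 #|E1| card_E2_le card_V2_le.
by rewrite hweight_split card_V1; apply: contra => /eqP w7; apply/eqP; lia.
Qed.

Let in_E2 u : u \in hedges G -> u \notin E1 -> u \in E2.
Proof. by move=> Gu; rewrite in_setD Gu andbT negbK. Qed.

Let rigid_profile_4_4 : #|E1| = 1 -> #|E2| = 4 -> #|V2| = 4 ->
  exists a b, hweight (hdel G [set a; b]) <= 3.
Proof.
move=> e1 e2 v2; have /cards1P[r defE1] : #|E1| == 1 by rewrite e1.
have card_Q : 3 < #|V2| by rewrite v2.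
have [a [b hit]] := transversal2_of_4edges e2 card_Q V2_in2 (E2_linear V2).
have rE1 : r \in E1 by rewrite defE1 set11.
have [card_r _] := E1_edge rE1.
exists a, b; apply: (hweight_del2_le3 (w := r)) => [|u Gu ur]; first by rewrite card_r.
by apply/hit/in_E2; rewrite // defE1 inE.
Qed.

Let rigid_profile_5_6 : #|E1| = 0 -> #|E2| = 5 -> #|V2| = 6 ->
  exists a b, hweight (hdel G [set a; b]) <= 3.
Proof.
move=> e1 e2 v2; have [w E2w colw] : exists2 w, w \in E2 & #|col w| <= 2.
  suff : ~~ [forall (u | u \in E2), 2 < #|col u|].
    by case/forall_inPn => w E2w; rewrite -leqNgt; exists w.
  apply/forall_inP => big; have : \sum_(u in E2) 3 <= \sum_(u in E2) #|col u|.
    by apply: leq_sum => u /big.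
  by rewrite sum_E2 sum_nat_const e2 v2.
have colw2 : #|col w| = 2.
  by have := subsetP E2_hedges w E2w; rewrite in_hedges => /andP[_]; lia.
have card_E : #|E2 :\ w| = 4 by have := cardsD1 w E2; rewrite E2w e2; lia.
have card_Q : 3 < #|V2 :\: col w|.
  have := cardsID (col w) V2; rewrite (setIidPr _) ?colw2 ?v2; first by lia.
  by case/setIdP: E2w.
have [a [b hit]] : exists a b, forall u, u \in E2 :\ w -> (a \in col u) || (b \in col u).
  apply: transversal2_of_4edges card_E card_Q _ _ => [q /setDP[qV2 qw] | u v].
    have [u [v [E2u E2v uv qu qv]]] := V2_in2 qV2.
    by exists u, v; rewrite !in_setD1 E2u E2v uv qu qv !andbT; split=> //;
      apply: contraNneq qw => <-.
  by rewrite !in_setD1 => /andP[_ E2u] /andP[_ E2v]; apply: E2_linear.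
exists a, b; apply: (hweight_del2_le3 (w := w)) => // u Gu uw.
by apply: hit; rewrite in_setD1 uw in_E2 // (cards0_eq e1) in_set0.
Qed.

Lemma rigid_hweight11 : hweight G = 11 -> exists a b, hweight (hdel G [set a; b]) <= 3.
Proof.
move=> w11; have : 3 * #|E1| + #|V2| + #|E2| = 11 by rewrite -w11 hweight_split card_V1; lia.
by case/(weight_profile11 card_E2_le card_V2_le) => [[e1 [e2 v2]] | [e1 [e2 v2]]];
  [apply: rigid_profile_4_4 | apply: rigid_profile_5_6].
Qed.

End Rigid.

Lemma hweight_drop_cases G :
  (exists a, hweight (hdel G [set a]) + 4 <= hweight G) \/
  (forall a, hweight G <= hweight (hdel G [set a]) + 3).
Proof.
have [/existsP|/existsPn no_drop4] := boolP [exists a, hweight (hdel G [set a]) + 4 <= hweight G].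
  by left.
by right=> a; have := no_drop4 a; lia.
Qed.

Lemma hweight_le7_del1 G : hweight G <= 7 ->
  exists2 A : {set X}, #|A| <= 1 & hweight (hdel G A) <= 3.
Proof.
move=> le7; case: (hweight_drop_cases G) => [[a drop4]|rigid].
  by exists [set a]; rewrite ?cards1 //; lia.
have [cover0|[a aG]] := set_0Vmem (hcover G).
  by exists set0; rewrite ?cards0 // hdel0 hcover0_weight.
exists [set a]; rewrite ?cards1 //.
by have := rigid_drop rigid aG; have := rigid_hweight_neq7 rigid; lia.
Qed.

Lemma hweight_del1_le7 G a : hweight (hdel G [set a]) <= 7 ->
  exists2 A : {set X}, #|A| <= 2 & hweight (hdel G A) <= 3.
Proof.
case/hweight_le7_del1=> A cardA wA; exists ([set a] :|: A); last by rewrite -hdelU.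
by apply: leq_trans (leq_card_setU _ _).1 _; rewrite cards1; lia.
Qed.

Lemma hweight_le11_del2 G : hweight G <= 11 ->
  exists2 A : {set X}, #|A| <= 2 & hweight (hdel G A) <= 3.
Proof.
move=> le11; case: (hweight_drop_cases G) => [[a drop4]|rigid].
  by apply: (hweight_del1_le7 (a := a)); lia.
have [cover0|[a aG]] := set_0Vmem (hcover G).
  by exists set0; rewrite ?cards0 // hdel0 hcover0_weight.
have [w11|ne11] := eqVneq (hweight G) 11.
  have [b [c wbc]] := rigid_hweight11 rigid w11.
  by exists [set b; c]; rewrite // cards2; case: (_ != _).
by apply: (hweight_del1_le7 (a := a)); have := rigid_drop rigid aG; lia.
Qed.

Lemma card_hcover_le2 G : hweight G <= 3 -> #|hcover G| <= 2.
Proof.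
move=> w3.
have [->|[x /hcoverP[u Gu _]]] := set_0Vmem (hcover G); first by rewrite cards0.
have : 0 < #|hedges G| by apply/card_gt0P; exists u.
by move: w3; rewrite /hweight; lia.
Qed.

End Hypergraph.

(** * Star decompositions *)

Section StarTree.

Variable n : nat.

Definition star_rel : rel 'I_n.+1 := fun i j => (i == ord0) (+) (j == ord0).

Definition star_path (x y : 'I_n.+1) : seq 'I_n.+1 :=
  if x == y then [::] else if (x == ord0) || (y == ord0) then [:: y] else [:: ord0; y].

Lemma star_simple_pathE x y p : simple_path star_rel x y p -> p = star_path x y.
Proof.
rewrite /simple_path /star_path; case: p => [|z1 [|z2 q]] /=.
- by rewrite andbT => /eqP->; rewrite eqxx.
- case/and4P=> /andP[xz1 _] /eqP<-; rewrite inE => /negbTE-> _.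
  by move: xz1; rewrite /star_rel; case: (x == ord0); case: (z1 == ord0).
- case/and5P=> /and3P[xz1 z1z2 z2q] /eqP<-; rewrite !inE !negb_or.
  case/and3P=> _ xz2 _ /andP[_ z1q] _; move: xz1 z1z2; rewrite /star_rel.
  have [z10|z1n0] := eqVneq z1 ord0; last first.
    by rewrite addbF => /eqP x0 /eqP z20; rewrite x0 z20 eqxx in xz2.
  rewrite addbT => x0 z20.
  case: q z2q z1q => [|z3 q] /=; last first.
    by case/andP; rewrite /star_rel (negbTE z20) z10 inE => /eqP->; rewrite eqxx.
  by rewrite (negbTE xz2) (negbTE x0) (negbTE z20) z10.
Qed.

Lemma star_tree : is_tree star_rel.
Proof.
have center_conn x : connect star_rel ord0 x && connect star_rel x ord0.
  have [->|x0] := eqVneq x ord0; first by rewrite connect0.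
  by apply/andP; split; apply: connect1; rewrite /star_rel eqxx (negbTE x0).
split=> [x y|x|x y|x y p q /star_simple_pathE-> /star_simple_pathE->] //.
- by rewrite /star_rel addbC.
- by rewrite /star_rel addbb.
- by case/andP: (center_conn x) => _ /connect_trans; apply; case/andP: (center_conn y).
Qed.

Lemma mem_star_path x y t : t \in x :: star_path x y ->
  [\/ t = x, t = y | [/\ t = ord0, x != ord0, y != ord0 & x != y]].
Proof.
rewrite /star_path; have [_|xy] := eqVneq x y; first by rewrite inE => /eqP; constructor 1.
case: ifP => [_|/negbT]; first by rewrite !inE => /orP[]/eqP; [constructor 1|constructor 2].
rewrite negb_or => /andP[x0 y0]; rewrite !inE.
by case/or3P=> /eqP; [constructor 1|constructor 3|constructor 2].
Qed.

End StarTree.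

Definition collapse (T : finType) (P : {set T}) (s : T) : T :=
  if s \in P then odflt s [pick x in P] else s.

Lemma collapse_eq (T : finType) (P : {set T}) s1 s2 :
  (collapse P s1 == collapse P s2) = (s1 == s2) || (s1 \in P) && (s2 \in P).
Proof.
have pickP_in s : s \in P -> odflt s [pick x in P] \in P.
  by move=> sP; case: pickP => [x /= ->|/(_ s)/=]; rewrite ?sP.
rewrite /collapse; case: (boolP (s1 \in P)) => s1P; case: (boolP (s2 \in P)) => s2P /=.
- by case: pickP => [x _|/(_ s1)]; rewrite ?eqxx ?orbT //= s1P.
- by rewrite orbF; apply/idP/idP=> /eqP eq12; [move: (pickP_in _ s1P) | move: s1P];
    rewrite eq12 (negbTE s2P).
- by rewrite orbF; apply/idP/idP=> /eqP eq12; [move: (pickP_in _ s2P) | move: s2P];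
    rewrite -eq12 (negbTE s1P).
- by rewrite orbF.
Qed.

Lemma card_collapse_fiber (T : finType) (D P : {set T}) (v : T) :
  #|P| <= 2 -> #|[set s in D | collapse P s == v]| <= 2.
Proof.
move=> card_P; set F := [set s in D | _].
have [/subset_leq_card/leq_trans->//|/subsetPn[s sF sP]] := boolP (F \subset P).
suff /subset_leq_card : F \subset [set s] by rewrite cards1 => /leq_trans->.
apply/subsetP=> t tF; rewrite inE; move: tF sF; rewrite !inE => /andP[_ /eqP<-] /andP[_].
by rewrite collapse_eq (negbTE sP) orbF eq_sym.
Qed.

Section DagDecomposition.

Variables (V : finType) (d : rel V).

Lemma source_reach s x : s \in sources d -> connect d x s -> x = s.
Proof.
move=> sS /connectP[p]; case/lastP: p => [//|p y].
rewrite rcons_path last_rcons => /andP[_ dy] sy; move: sS.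
by rewrite sy inE => /forallP/(_ (last x p)); rewrite dy.
Qed.

Lemma reachBP (B : {set V}) z :
  reflect (exists2 s, s \in B & connect d s z) (z \in reachB d B).
Proof.
by apply: (iffP bigcupP) => [[s sB]|[s sB sz]]; [rewrite inE; exists s | exists s; rewrite ?inE].
Qed.

Lemma dtw_le2_star (C P : {set V}) :
  C \subset sources d -> #|C| <= 2 -> #|P| <= 2 ->
  (forall s1 s2, s1 \in sources d :\: C -> s2 \in sources d :\: C -> s1 != s2 ->
     ~~ ((s1 \in P) && (s2 \in P)) -> reach d s1 :&: reach d s2 \subset reachB d C) ->
  dtw_le d 2.
Proof.
move=> C_src card_C card_P sep.
pose leaf (j : 'I_#|V|) := [set s in sources d :\: C | collapse P s == enum_val j].
pose B (i : 'I_#|V|.+1) := if unlift ord0 i is Some j then leaf j else C.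
have B_lift j : B (lift ord0 j) = leaf j by rewrite /B liftK.
have leaf_sep j1 j2 : j1 != j2 -> reachB d (leaf j1) :&: reachB d (leaf j2) \subset reachB d C.
  move=> j12; apply/subsetP=> z /setIP[/reachBP[s1 s1j z1] /reachBP[s2 s2j z2]].
  case/setIdP: s1j => s1SC /eqP j1E; case/setIdP: s2j => s2SC /eqP j2E.
  have : collapse P s1 != collapse P s2.
    by apply: contra j12; rewrite j1E j2E => /eqP/enum_val_inj->.
  rewrite collapse_eq negb_or => /andP[s12 notP].
  by apply: (subsetP (sep _ _ s1SC s2SC s12 notP)); rewrite !inE z1 z2.
exists #|V|, (@star_rel #|V|), B; split.
- split; first exact: star_tree.
  + by move=> i; rewrite /B; case: (unlift ord0 i) => // j; apply/subsetP=> s /setIdP[/setDP[]].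
  + move=> s sS; have [sC|sC] := boolP (s \in C); first by exists ord0; rewrite /B unlift_none.
    exists (lift ord0 (enum_rank (collapse P s))).
    by rewrite B_lift inE in_setD sC sS enum_rankK /=.
  + move=> t1 t2 p t /star_simple_pathE-> /mem_star_path[->|->|[-> t10 t20 t12]].
    * exact: subsetIl.
    * exact: subsetIr.
    rewrite /B unlift_none.
    rewrite eq_sym in t10; rewrite eq_sym in t20.
    case: (unlift_some t10) (unlift_some t20) => j1 def1 -> [j2 def2 ->].
    by apply: leaf_sep; apply: contra t12 => /eqP j12; rewrite def1 def2 j12.
- apply/bigmax_leqP=> i _; rewrite /B; case: (unlift ord0 i) => // j.
  exact: card_collapse_fiber.
Qed.

(** * The hypergraph of source ancestors *)

Definition source_ancestors (u : V) := [set s in sources d | connect d s u].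

Lemma hweight_source_ancestors : hweight source_ancestors setT <= #|V|.
Proof.
have cover_src : hcover source_ancestors setT \subset sources d.
  by apply/subsetP=> x /hcoverP[u _]; rewrite inE => /andP[].
have edges_nsrc : hedges source_ancestors setT \subset ~: sources d.
  apply/subsetP=> u; rewrite in_hedges in_setC => /andP[_]; apply: contraTN => uS.
  suff /subset_leq_card : source_ancestors u \subset [set u] by rewrite cards1 -leqNgt.
  by apply/subsetP=> s; rewrite !inE => /andP[_ /(source_reach uS)->].
rewrite /hweight -(cardsC (sources d)) leq_add ?subset_leq_card //.
Qed.

Lemma common_reach_hcover (A : {set V}) s1 s2 z :
  s1 \in sources d -> s2 \in sources d -> s1 != s2 -> connect d s1 z -> connect d s2 z ->
  z \notin reachB d (A :&: sources d) ->
  (s1 \in hcover source_ancestors (hdel source_ancestors setT A)) &&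
  (s2 \in hcover source_ancestors (hdel source_ancestors setT A)).
Proof.
move=> s1S s2S s12 s1z s2z zA.
have s1a : s1 \in source_ancestors z by rewrite inE s1S.
have s2a : s2 \in source_ancestors z by rewrite inE s2S.
have z_edge : z \in hedges source_ancestors (hdel source_ancestors setT A).
  rewrite in_hedges inE in_setT; apply/andP; split; last by apply/card_gt1P; exists s1, s2.
  rewrite disjoints_subset; apply/subsetP=> s /setIdP[sS sz]; rewrite in_setC.
  by apply: contraNN zA => sA; apply/reachBP; exists s; rewrite ?in_setI ?sA.
by rewrite !(subsetP (sub_hcover z_edge)).
Qed.

End DagDecomposition.

Theorem mainTheorem17 (V : finType) (e : rel V) :
  simple_graph e -> #|V| <= 11 ->
  forall d : rel V, orientation e d -> acyclic_digraph d -> dtw_le d 2.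
Proof.
move=> _ le11 d _ _.
have [A card_A wA] := hweight_le11_del2 (leq_trans (hweight_source_ancestors d) le11).
apply: (dtw_le2_star (C := A :&: sources d)
  (P := hcover (source_ancestors d) (hdel (source_ancestors d) setT A))).
- exact: subsetIr.
- exact: leq_trans (subset_leq_card (subsetIl _ _)) card_A.
- exact: card_hcover_le2 wA.
move=> s1 s2 /setDP[s1S _] /setDP[s2S _] s12 notP; apply/subsetP=> z /setIP[].
rewrite !inE => s1z s2z; apply: contraR notP.
exact: common_reach_hcover.
Qed.
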